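(* Let $T\in\mathcal{L}(\mathcal{H})$ have closed range and let $n\ge1$. Suppose that either (i) $T^\dagger T$ commutes with $T^n+T^\dagger$, or (ii) $T^\dagger T$ commutes with $T^n+T^*$. Then $T$ is $n$-hypo-EP.
   Context: $\mathcal{H}$ is a Hilbert space, $\mathcal{L}(\mathcal{H})$ the bounded operators on it; $R(\cdot)$ denotes range. For $T$ with closed range, $T^\dagger$ is its Moore–Penrose inverse (unique solution of $TT^\dagger T=T$, $T^\dagger TT^\dagger=T^\dagger$, $(T^\dagger T)^*=T^\dagger T$, $(TT^\dagger)^*=TT^\dagger$). For $n\ge1$, $T$ is $n$-hypo-EP if $T$ has closed range and $R(T^n)\subset R(T^* )$. *)

From HB Require Import structures.
From mathcomp Require Import all_boot all_order all_algebra.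
From mathcomp Require Import reals.
From mathcomp Require Import complex.
Set Implicit Arguments. Unset Strict Implicit. Unset Printing Implicit Defensive.
Import Order.TTheory GRing.Theory Num.Theory.
Local Open Scope ring_scope.

Section Hilbert.
Variables (R : realType).
Local Notation C := (R[i]).
Variables (H : lmodType C) (ip : H -> H -> C).

Definition hnorm (x : H) : C := sqrtC (ip x x).

Definition hconverges (u : nat -> H) (l : H) : Prop :=
  forall eps : C, 0 < eps -> exists N : nat, forall k : nat, (N <= k)%N ->
    hnorm (u k - l) < eps.

Definition hcauchy (u : nat -> H) : Prop :=
  forall eps : C, 0 < eps -> exists N : nat, forall k m : nat, (N <= k)%N ->
    (N <= m)%N -> hnorm (u k - u m) < eps.

Record is_hilbert : Prop := IsHilbert {
  ip_linearl : forall (a : C) (x y z : H), ip (a *: x + y) z = a * ip x z + ip y z;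
  ip_conj : forall x y : H, ip y x = (ip x y)^*;
  ip_ge0 : forall x : H, 0 <= ip x x;
  ip_eq0 : forall x : H, ip x x = 0 -> x = 0;
  h_complete : forall u : nat -> H, hcauchy u -> exists l, hconverges u l
}.

Definition bounded_op (T : H -> H) : Prop :=
  (forall (a : C) (x y : H), T (a *: x + y) = a *: T x + T y) /\
  exists M : C, 0 <= M /\ forall x : H, hnorm (T x) <= M * hnorm x.

Definition range (T : H -> H) (y : H) : Prop := exists x, T x = y.

Definition closed_set (S : H -> Prop) : Prop :=
  forall (u : nat -> H) (l : H), (forall k, S (u k)) -> hconverges u l -> S l.

Definition closed_range (T : H -> H) : Prop := closed_set (range T).

Definition is_adjoint (T Ts : H -> H) : Prop :=
  bounded_op Ts /\ forall x y : H, ip (T x) y = ip x (Ts y).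

Definition is_MP_inverse (T Td : H -> H) : Prop :=
  [/\ bounded_op Td,
      forall x, T (Td (T x)) = T x,
      forall x, Td (T (Td x)) = Td x,
      is_adjoint (Td \o T) (Td \o T) &
      is_adjoint (T \o Td) (T \o Td)].

Definition commute_op (P Q : H -> H) : Prop := forall x, P (Q x) = Q (P x).

Definition op_add (P Q : H -> H) : H -> H := fun x => P x + Q x.

Definition op_pow (T : H -> H) (n : nat) : H -> H := iter n T.

Definition n_hypo_EP (n : nat) (T Ts : H -> H) : Prop :=
  closed_range T /\ (forall y, range (op_pow T n) y -> range Ts y).

End Hilbert.

(* P := T^† T is the orthogonal projection with T P = T and P T^* = T^*.
   Either commutation hypothesis, applied to P u, gives P T^n = T^n, so
   R(T^n) is contained in R(P) and it remains to show R(P) ⊆ R(T^* ).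
   On R(P) we have |x| <= |T^†| |T x|, so for A := T^* T / |T^*|^2 the map
   x |-> x - A x is a contraction of R(P) into itself; summing its iterates
   (a Neumann series, convergent since H is complete) solves A z = w for
   every w in R(P). *)

From HB Require Import structures.
From mathcomp Require Import all_boot all_order all_algebra.
From mathcomp Require Import reals complex.
From mathcomp Require Import normedtype sequences.
From mathcomp Require Import ring lra.
Set Implicit Arguments. Unset Strict Implicit. Unset Printing Implicit Defensive.
Import Order.TTheory GRing.Theory Num.Theory.
Local Open Scope complex_scope.
Local Open Scope ring_scope.

Section ComplexReal.
Variable R : rcfType.
(* Once normedtype is loaded, the bare name [Re] denotes [Num.Re]. *)
Local Notation Re := complex.Re.

Lemma ReD (a b : R[i]) : Re (a + b) = Re a + Re b.
Proof. by case: a; case: b. Qed.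

Lemma ReN (a : R[i]) : Re (- a) = - Re a.
Proof. by case: a. Qed.

Lemma ReJ (z : R[i]) : Re z^* = Re z.
Proof. by case: z. Qed.

Lemma Re_realM (t : R) (z : R[i]) : Re (t%:C * z) = t * Re z.
Proof. by case: z => a b /=; ring. Qed.

Lemma conj_real (t : R) : t%:C^* = t%:C.
Proof. by apply: conj_Creal; rewrite complex_real. Qed.

Lemma ge0_complex_real (z : R[i]) : 0 <= z -> z = (Re z)%:C.
Proof. by case: z => a b; rewrite lecE /= => /andP[/eqP ->]. Qed.

Lemma gt0_complex_real (z : R[i]) : 0 < z -> exists2 e : R, 0 < e & z = e%:C.
Proof.
move=> z_gt0; have z_real := ge0_complex_real (ltW z_gt0).
by exists (Re z); rewrite // -ltcR -z_real.
Qed.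

End ComplexReal.

Lemma expr_lt_eventually (R : archiRealFieldType) (s e : R) :
  0 <= s -> s < 1 -> 0 < e ->
  exists N, forall k, (N <= k)%N -> s ^+ k < e.
Proof.
move=> s_ge0 s_lt1 e_gt0.
have s_norm_lt1 : `|s| < 1 by rewrite ger0_norm.
have [N _ hN] :=
  @cvgr0_norm_lt R R^o _ _ _ (fun k => s ^+ k) (cvg_expr s_norm_lt1) e e_gt0.
by exists N => k /hN /=; rewrite ger0_norm // exprn_ge0.
Qed.

Section Hilbert.
Variables (R : realType) (H : lmodType R[i]) (ip : H -> H -> R[i]).
Hypothesis hH : is_hilbert ip.
Local Notation Re := complex.Re.

Lemma ipDl x y z : ip (x + y) z = ip x z + ip y z.
Proof. by have := ip_linearl hH 1 x y z; rewrite scale1r mul1r. Qed.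

Lemma ip0l z : ip 0 z = 0.
Proof. by apply/(addrI (ip 0 z)); rewrite -ipDl !addr0. Qed.

Lemma ipZl a x z : ip (a *: x) z = a * ip x z.
Proof. by have := ip_linearl hH a x 0 z; rewrite addr0 ip0l addr0. Qed.

Lemma ipNl x z : ip (- x) z = - ip x z.
Proof. by rewrite -scaleN1r ipZl mulN1r. Qed.

Lemma ipDr x y z : ip x (y + z) = ip x y + ip x z.
Proof. by rewrite !(ip_conj hH _ x) ipDl rmorphD. Qed.

Lemma ipZr a x y : ip x (a *: y) = a^* * ip x y.
Proof. by rewrite !(ip_conj hH _ x) ipZl rmorphM. Qed.

Lemma ipNr x y : ip x (- y) = - ip x y.
Proof. by rewrite !(ip_conj hH _ x) ipNl rmorphN. Qed.

Lemma ipBr x y z : ip x (y - z) = ip x y - ip x z.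
Proof. by rewrite ipDr ipNr. Qed.

Definition dotR x y := Re (ip x y).
Definition sqnorm x := dotR x x.

Lemma ip_sqnorm x : ip x x = (sqnorm x)%:C.
Proof. exact: ge0_complex_real (ip_ge0 hH x). Qed.

Lemma sqnorm_ge0 x : 0 <= sqnorm x.
Proof. by rewrite -ler0c -ip_sqnorm ip_ge0. Qed.

Lemma sqnorm_eq0 x : sqnorm x = 0 -> x = 0.
Proof. by move=> x0; apply: (ip_eq0 hH); rewrite ip_sqnorm x0. Qed.

Lemma sqnorm0 : sqnorm 0 = 0.
Proof. by rewrite /sqnorm /dotR ip0l. Qed.

Lemma dotRC x y : dotR y x = dotR x y.
Proof. by rewrite /dotR (ip_conj hH x y) ReJ. Qed.

Lemma sqnormD x y : sqnorm (x + y) = sqnorm x + sqnorm y + 2 * dotR x y.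
Proof.
rewrite /sqnorm /dotR ipDl !ipDr !ReD -!/(dotR _ _) (dotRC x y); ring.
Qed.

Lemma sqnormBZ x y (t : R) :
  sqnorm (x - t%:C *: y) = sqnorm x - 2 * t * dotR x y + t ^+ 2 * sqnorm y.
Proof.
rewrite sqnormD /sqnorm /dotR ipNl !ipNr opprK !ipZl !ipZr conj_real.
rewrite ReN !Re_realM -!/(dotR _ _); ring.
Qed.

Definition nrm x := Num.sqrt (sqnorm x).

Lemma nrm_ge0 x : 0 <= nrm x.
Proof. exact: sqrtr_ge0. Qed.

Lemma sqr_nrm x : nrm x ^+ 2 = sqnorm x.
Proof. exact/sqr_sqrtr/sqnorm_ge0. Qed.

Lemma hnormE x : hnorm ip x = (nrm x)%:C.
Proof. by rewrite /hnorm ip_sqnorm -sqr_nrm rmorphXn sqrCK // ler0c nrm_ge0. Qed.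

Lemma nrm_eq0 x : nrm x = 0 -> x = 0.
Proof. by move=> x0; apply: sqnorm_eq0; rewrite -sqr_nrm x0 expr0n. Qed.

Lemma nrm0 : nrm 0 = 0.
Proof. by rewrite /nrm sqnorm0 sqrtr0. Qed.

Lemma nrmN x : nrm (- x) = nrm x.
Proof. by rewrite /nrm /sqnorm /dotR ipNl ipNr opprK. Qed.

Lemma nrmZ (t : R) x : nrm (t%:C *: x) = `|t| * nrm x.
Proof.
rewrite /nrm /sqnorm /dotR ipZl ipZr conj_real !Re_realM mulrA -expr2.
by rewrite sqrtrM ?sqrtr_sqr ?sqr_ge0.
Qed.

Lemma dotR_le_nrmM x y : dotR x y <= nrm x * nrm y.
Proof.
have [y0|y_neq0] := eqVneq (sqnorm y) 0.
  by rewrite (sqnorm_eq0 y0) nrm0 mulr0 -dotRC /dotR ip0l.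
have y_gt0 : 0 < sqnorm y by rewrite lt0r y_neq0 sqnorm_ge0.
have sqr_dotR : dotR x y ^+ 2 <= sqnorm x * sqnorm y.
  pose t := dotR x y / sqnorm y.
  have := sqnorm_ge0 (x - t%:C *: y); rewrite sqnormBZ.
  have -> : sqnorm x - 2 * t * dotR x y + t ^+ 2 * sqnorm y =
            sqnorm x - dotR x y ^+ 2 / sqnorm y.
    by rewrite /t; field; rewrite y_neq0.
  by rewrite subr_ge0 ler_pdivrMr.
apply: le_trans (ler_norm _) _.
rewrite -sqrtr_sqr /nrm -sqrtrM ?sqnorm_ge0 //.
by rewrite ler_sqrt // mulr_ge0 ?sqnorm_ge0.
Qed.

Lemma ler_nrmD x y : nrm (x + y) <= nrm x + nrm y.
Proof.
rewrite -ler_sqr ?nnegrE ?addr_ge0 ?nrm_ge0 // sqr_nrm sqnormD -!sqr_nrm sqrrD.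
by have := dotR_le_nrmM x y; lra.
Qed.

Lemma hconvergesP u l : hconverges ip u l <->
  forall e : R, 0 < e -> exists N, forall k, (N <= k)%N -> nrm (u k - l) < e.
Proof.
split=> hu e e_gt0.
  have [|N hN] := hu e%:C; first by rewrite ltcR.
  by exists N => k /hN; rewrite hnormE ltcR.
have [e' e'_gt0 ->] := gt0_complex_real e_gt0.
have [N hN] := hu e' e'_gt0.
by exists N => k /hN; rewrite hnormE ltcR.
Qed.

Lemma hcauchyP u : hcauchy ip u <->
  forall e : R, 0 < e -> exists N, forall k m, (N <= k)%N -> (N <= m)%N ->
    nrm (u k - u m) < e.
Proof.
split=> hu e e_gt0.
  have [|N hN] := hu e%:C; first by rewrite ltcR.
  by exists N => k m /hN /[apply]; rewrite hnormE ltcR.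
have [e' e'_gt0 ->] := gt0_complex_real e_gt0.
have [N hN] := hu e' e'_gt0.
by exists N => k m /hN /[apply]; rewrite hnormE ltcR.
Qed.

Lemma hconverges_unique u l1 l2 :
  hconverges ip u l1 -> hconverges ip u l2 -> l1 = l2.
Proof.
move=> /hconvergesP hu1 /hconvergesP hu2; apply/eqP; rewrite -subr_eq0.
apply/eqP/nrm_eq0/eqP; rewrite eq_le nrm_ge0 andbT leNgt; apply/negP => d_gt0.
have [N1 hN1] := hu1 _ (divr_gt0 d_gt0 (ltr0Sn _ 1)).
have [N2 hN2] := hu2 _ (divr_gt0 d_gt0 (ltr0Sn _ 1)).
have := hN1 _ (leq_maxl N1 N2); have := hN2 _ (leq_maxr N1 N2).
set k := maxn N1 N2; have := ler_nrmD (l1 - u k) (u k - l2).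
by rewrite addrA subrK -(nrmN (l1 - u k)) opprB; lra.
Qed.

Lemma hconverges_geometric u l (s W : R) : 0 <= s -> s < 1 ->
  (forall k, nrm (u k - l) <= s ^+ k * W) -> hconverges ip u l.
Proof.
move=> s_ge0 s_lt1 hu; apply/hconvergesP => e e_gt0.
have [|N hN] := expr_lt_eventually s_ge0 s_lt1 (_ : 0 < e / (`|W| + 1)).
  by rewrite divr_gt0 // ltr_wpDl.
exists N => k /hN; rewrite ltr_pdivlMr ?ltr_wpDl // => hk.
apply: le_lt_trans (hu k) (le_lt_trans _ hk).
by rewrite ler_wpM2l ?exprn_ge0 // ler_wpDr // ler_norm.
Qed.

Lemma nrm_partial_sum_sub (r : nat -> H) (s W : R) k d : s < 1 ->
  (forall j, nrm (r j) <= s ^+ j * W) ->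
  (1 - s) * nrm (\sum_(j < k + d) r j - \sum_(j < k) r j) <=
    W * (s ^+ k - s ^+ (k + d)).
Proof.
move=> s_lt1 hr; have gap_ge0 : 0 <= 1 - s by lra.
elim: d => [|d IHd]; first by rewrite addn0 !subrr nrm0 !mulr0.
rewrite addnS big_ord_recr /= addrAC exprS.
have := ler_wpM2l gap_ge0 (hr (k + d)%N).
have := ler_wpM2l gap_ge0
  (ler_nrmD (\sum_(j < k + d) r j - \sum_(j < k) r j) (r (k + d)%N)).
lra.
Qed.

Lemma hcauchy_geometric_series (r : nat -> H) (s W : R) : 0 <= s -> s < 1 ->
  (forall j, nrm (r j) <= s ^+ j * W) -> hcauchy ip (fun k => \sum_(j < k) r j).
Proof.
move=> s_ge0 s_lt1 hr; apply/hcauchyP => e e_gt0.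
have gap_gt0 : 0 < 1 - s by lra.
have [|N hN] := expr_lt_eventually s_ge0 s_lt1 (_ : 0 < (1 - s) * e / (`|W| + 1)).
  by rewrite divr_gt0 ?mulr_gt0 // ltr_wpDl.
have tail k m : (N <= k)%N -> (k <= m)%N ->
    nrm (\sum_(j < m) r j - \sum_(j < k) r j) < e.
  move=> /hN + /subnKC <-; rewrite ltr_pdivlMr ?ltr_wpDl // => hk.
  rewrite -(ltr_pM2l gap_gt0).
  apply: le_lt_trans (@nrm_partial_sum_sub r s W k (m - k) s_lt1 hr) _.
  have := ler_wiXn2l s_ge0 (ltW s_lt1) (leq_addr (m - k) k).
  have := exprn_ge0 (k + (m - k)) s_ge0; have := ler_norm W.
  have := ler_norm (- W); rewrite normrN; nra.
exists N => k m hk hm; have [km|/ltnW mk] := leqP k m; last exact: tail.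
by rewrite -nrmN opprB tail.
Qed.

Section BoundedOperator.
Variable F : H -> H.
Hypothesis hF : bounded_op ip F.

Lemma opD x y : F (x + y) = F x + F y.
Proof. by case: hF => linF _; have := linF 1 x y; rewrite !scale1r. Qed.

Lemma op0 : F 0 = 0.
Proof. by apply/(addrI (F 0)); rewrite -opD !addr0. Qed.

Lemma opZ a x : F (a *: x) = a *: F x.
Proof. by case: hF => linF _; have := linF a x 0; rewrite !addr0 op0 addr0. Qed.

Lemma opB x y : F (x - y) = F x - F y.
Proof. by rewrite opD -scaleN1r opZ scaleN1r. Qed.

Lemma op_bound : exists M : R, 1 <= M /\ forall x, nrm (F x) <= M * nrm x.
Proof.
case: hF => _ [M [M_ge0 hM]]; have M_real := ge0_complex_real M_ge0.
have ReM_ge0 : 0 <= Re M by rewrite -ler0c -M_real.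
exists (Re M + 1); split=> [|x]; first by rewrite lerDr.
have := hM x; rewrite !hnormE M_real -rmorphM lecR => /le_trans; apply.
by rewrite ler_wpM2r ?nrm_ge0 ?lerDl.
Qed.

Lemma hconverges_op u l : hconverges ip u l -> hconverges ip (F \o u) (F l).
Proof.
have [M [M_ge1 hM]] := op_bound; have M_gt0 : 0 < M by lra.
move=> /hconvergesP hu; apply/hconvergesP => e e_gt0.
have [N hN] := hu _ (divr_gt0 e_gt0 M_gt0).
exists N => k /hN; rewrite ltr_pdivlMr // mulrC => hk.
by rewrite /= -opB; apply: le_lt_trans (hM _) hk.
Qed.

End BoundedOperator.

Lemma bounded_op_comp F G :
  bounded_op ip F -> bounded_op ip G -> bounded_op ip (F \o G).
Proof.
move=> [linF [MF [MF_ge0 hMF]]] [linG [MG [MG_ge0 hMG]]]; split.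
  by move=> a x y; rewrite /= linG linF.
exists (MF * MG); split=> [|x]; first exact: mulr_ge0.
by apply: le_trans (hMF _) _; rewrite -mulrA ler_wpM2l.
Qed.

Lemma bounded_op_scale (t : R) F : 0 <= t -> bounded_op ip F ->
  bounded_op ip (fun x => t%:C *: F x).
Proof.
move=> t_ge0 [linF [M [M_ge0 hM]]]; split.
  by move=> a x y; rewrite linF scalerDr !scalerA mulrC.
exists (t%:C * M); split=> [|x]; first by rewrite mulr_ge0 ?ler0c.
by rewrite hnormE nrmZ ger0_norm // rmorphM /= -hnormE -mulrA ler_wpM2l ?ler0c.
Qed.

Section Contraction.
Variables (A : H -> H) (S : H -> Prop) (s : R).
Hypotheses (hA : bounded_op ip A) (s_ge0 : 0 <= s) (s_lt1 : s < 1).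
Hypothesis S_stable : forall x, S x -> S (x - A x).
Hypothesis contractive : forall x, S x -> nrm (x - A x) <= s * nrm x.

Lemma contraction_range w : S w -> exists z, A z = w.
Proof.
move=> Sw; pose r k := iter k (fun x => x - A x) w.
have Sr k : S (r k) by elim: k => //= k /S_stable.
have r_bound k : nrm (r k) <= s ^+ k * nrm w.
  elim: k => [|k IHk]; first by rewrite mul1r.
  by apply: le_trans (contractive (Sr k)) _; rewrite exprS -mulrA ler_wpM2l.
have A_partial_sum k : A (\sum_(j < k) r j) = w - r k.
  elim: k => [|k IHk]; first by rewrite big_ord0 (op0 hA) subrr.
  by rewrite big_ord_recr (opD hA) IHk /= opprB addrA addrAC.
have [z hz] := h_complete hH (hcauchy_geometric_series s_ge0 s_lt1 r_bound).
exists z; apply: hconverges_unique (hconverges_op hA hz) _.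
apply: (@hconverges_geometric _ _ s (nrm w)) => // k.
by rewrite /= A_partial_sum addrAC subrr add0r nrmN.
Qed.

End Contraction.

Section MoorePenrose.
Variables T Ts Td : H -> H.
Hypotheses (hT : bounded_op ip T) (hTs : is_adjoint ip T Ts).
Hypothesis hTd : is_MP_inverse ip T Td.

Lemma MP_proj_adjoint v : Td (T (Ts v)) = Ts v.
Proof.
(* For a := P T^* v - T^* v,
   <a, P T^* v> = <T P a, v> = <T a, v> = <a, T^* v>. *)
case: hTs => _ adjT; case: hTd => _ TTdT _ [_ adjP] _.
apply/eqP; rewrite -subr_eq0; apply/eqP/(ip_eq0 hH).
set a := Td (T (Ts v)) - Ts v.
rewrite {2}/a ipBr; have /= <- := adjP a (Ts v).
by rewrite -adjT TTdT adjT subrr.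
Qed.

(* For t := m^-2,
   |x - t T^* T x|^2 <= |x|^2 - t |T x|^2 <= (1 - t / c^2) |x|^2. *)
Lemma adjoint_step_contraction (m c : R) x : 1 <= m -> 1 <= c ->
  (forall y, nrm (Ts y) <= m * nrm y) -> nrm x <= c * nrm (T x) ->
  nrm (x - (m ^- 2)%:C *: Ts (T x)) <= Num.sqrt (1 - (m * c) ^- 2) * nrm x.
Proof.
case: hTs => _ adjT m_ge1 c_ge1 hm hx.
have mc_ge1 : 1 <= (m * c) ^+ 2 by rewrite exprn_ege1 // mulr_ege1.
have q_ge0 : 0 <= 1 - (m * c) ^- 2.
  by rewrite subr_ge0 invf_le1 // (lt_le_trans ltr01 mc_ge1).
rewrite /nrm -sqrtrM // ler_sqrt ?mulr_ge0 ?sqnorm_ge0 //.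
have dotR_adj : dotR x (Ts (T x)) = sqnorm (T x) by rewrite /dotR -adjT.
have hq : sqnorm (Ts (T x)) <= m ^+ 2 * sqnorm (T x).
  by rewrite -!sqr_nrm -exprMn ler_sqr ?nnegrE ?mulr_ge0 ?nrm_ge0 //; lra.
have hb : c ^- 2 * sqnorm x <= sqnorm (T x).
  have c2_gt0 : 0 < c ^+ 2 by rewrite exprn_gt0 //; lra.
  rewrite -(ler_pM2l c2_gt0) mulrA mulfV ?gt_eqF // mul1r.
  by rewrite -!sqr_nrm -exprMn ler_sqr ?nnegrE ?mulr_ge0 ?nrm_ge0 //; lra.
have t_ge0 : 0 <= m ^- 2 by rewrite invr_ge0 exprn_ge0 //; lra.
have hq' : (m ^- 2) ^+ 2 * sqnorm (Ts (T x)) <= m ^- 2 * sqnorm (T x).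
  have tm : (m ^- 2) ^+ 2 * m ^+ 2 = m ^- 2 by field; lra.
  by apply: le_trans (ler_wpM2l (exprn_ge0 2 t_ge0) hq) _; rewrite mulrA tm.
have hb' := ler_wpM2l t_ge0 hb.
by rewrite sqnormBZ dotR_adj exprMn invfM; lra.
Qed.

Lemma MP_range_adjoint w : exists z, Ts z = Td (T w).
Proof.
have [hTs_bdd _] := hTs; have [hTd_bdd TTdT _ _ _] := hTd.
have [m [m_ge1 hm]] := op_bound hTs_bdd.
have [c [c_ge1 hc]] := op_bound hTd_bdd.
have t_ge0 : 0 <= m ^- 2 by rewrite invr_ge0 exprn_ge0 //; lra.
pose A x := (m ^- 2)%:C *: Ts (T x).
have hA : bounded_op ip A :=
  bounded_op_scale t_ge0 (bounded_op_comp hTs_bdd hT).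
pose s := Num.sqrt (1 - (m * c) ^- 2).
have s_lt1 : s < 1.
  rewrite -[ltRHS]sqrtr1 ltr_sqrt ?ltr01 // ltrBlDr ltrDl invr_gt0 exprn_gt0 //.
  by rewrite mulr_gt0 //; lra.
have A_stable x : Td (T x) = x -> Td (T (x - A x)) = x - A x.
  move=> Px; rewrite (opB hT) (opB hTd_bdd) (opZ hT) (opZ hTd_bdd).
  by rewrite MP_proj_adjoint Px.
have A_contractive x : Td (T x) = x -> nrm (x - A x) <= s * nrm x.
  by move=> Px; apply: adjoint_step_contraction => //; rewrite -{1}Px hc.
have [z Az] := contraction_range hA (sqrtr_ge0 _) s_lt1 A_stable A_contractive
  (congr1 Td (TTdT w)).
by exists ((m ^- 2)%:C *: T z); rewrite (opZ hTs_bdd).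
Qed.

Lemma MP_proj_pow n : (1 <= n)%N ->
  commute_op (Td \o T) (op_add (op_pow T n) Td) \/
  commute_op (Td \o T) (op_add (op_pow T n) Ts) ->
  forall u, Td (T (op_pow T n u)) = op_pow T n u.
Proof.
move=> n_ge1 hcomm u; have [hTd_bdd TTdT TdTTd _ _] := hTd.
have pow_P : op_pow T n (Td (T u)) = op_pow T n u.
  by rewrite /op_pow -(prednK n_ge1) !iterSr TTdT.
have P_idem : Td (T (Td (T u))) = Td (T u) by rewrite TTdT.
case: hcomm => /(_ (Td (T u)));
  rewrite /= /op_add (opD hT) (opD hTd_bdd) P_idem pow_P.
  by rewrite TdTTd => /addIr.
by rewrite MP_proj_adjoint => /addIr.
Qed.

End MoorePenrose.
End Hilbert.

Theorem mainTheorem15 (R : realType) (H : lmodType R[i]) (ip : H -> H -> R[i])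
  (hH : is_hilbert ip) (T Ts Td : H -> H) (n : nat)
  (hn : (1 <= n)%N)
  (hT : bounded_op ip T) (hcl : closed_range ip T)
  (hTs : is_adjoint ip T Ts) (hTd : is_MP_inverse ip T Td) :
  (commute_op (Td \o T) (op_add (op_pow T n) Td) \/
   commute_op (Td \o T) (op_add (op_pow T n) Ts)) ->
  n_hypo_EP ip n T Ts.
Proof.
move=> hcomm; split=> // y [x <-].
have [z hz] := MP_range_adjoint hH hT hTs hTd (op_pow T n x).
by exists z; rewrite hz (MP_proj_pow hH hT hTs hTd hn hcomm).
Qed.
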